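(* A general ring $I$ is strongly regular if and only if $I$ is quasipolar and $QN(I)=\{0\}$.
   Context: A general ring is an associative ring not necessarily having an identity. For $p,q\in I$, $p*q=p+q-pq$; $Q(I)=\{q\in I\mid p*q=0=q*p \text{ for some } p\in I\}$; $\mathrm{comm}(a)=\{x\in I\mid xa=ax\}$, $\mathrm{comm}^2(a)=\{x\in I\mid xy=yx\text{ for all }y\in\mathrm{comm}(a)\}$; $QN(I)=\{q\in I\mid qx\in Q(I)\text{ for every }x\in\mathrm{comm}(q)\}$. An element $a\in I$ is quasipolar in $I$ if there is an idempotent $p=p^2\in\mathrm{comm}^2(a)$ with $a+p\in Q(I)$ and $a-ap\in QN(I)$; $I$ is quasipolar if every element is. An element $a$ is strongly regular if $a=aba$ for some $b\in I$ with $ab=ba$; $I$ is strongly regular if every element is. *)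

From HB Require Import structures.
From mathcomp Require Import all_boot all_order all_algebra.
Set Implicit Arguments. Unset Strict Implicit. Unset Printing Implicit Defensive.
Import GRing.Theory.
Local Open Scope ring_scope.

Record genRing := GenRing {
  carrier :> zmodType;
  gmul : carrier -> carrier -> carrier;
  gmulA : forall x y z, gmul x (gmul y z) = gmul (gmul x y) z;
  gmulDl : forall x y z, gmul (x + y) z = gmul x z + gmul y z;
  gmulDr : forall x y z, gmul x (y + z) = gmul x y + gmul x z
}.

Section Defs.
Variable I : genRing.
Local Notation "x ** y" := (gmul x y) (at level 40, left associativity).

Definition circ (p q : I) : I := p + q - p ** q.

Definition Qset (q : I) : Prop := exists p : I, circ p q = 0 /\ circ q p = 0.

Definition commset (a x : I) : Prop := x ** a = a ** x.

Definition comm2set (a x : I) : Prop :=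
  forall y : I, commset a y -> x ** y = y ** x.

Definition QNset (q : I) : Prop := forall x : I, commset q x -> Qset (q ** x).

Definition quasipolar_elt (a : I) : Prop :=
  exists p : I, [/\ p ** p = p, comm2set a p, Qset (a + p) & QNset (a - a ** p)].

Definition quasipolar : Prop := forall a : I, quasipolar_elt a.

Definition strongly_regular_elt (a : I) : Prop :=
  exists b : I, a = a ** b ** a /\ a ** b = b ** a.

Definition strongly_regular : Prop := forall a : I, strongly_regular_elt a.

End Defs.

From mathcomp Require Import all_boot all_order all_algebra.
Import GRing.Theory.
Local Open Scope ring_scope.

(* (=>) Strong regularity forbids nonzero square-zero elements, so every
   idempotent of I is central.  For a = aba with ab = ba, the idempotent
   p = ab is therefore in comm^2(a), a - ap = 0 lies in QN(I), and a + p is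
   quasi-invertible with quasi-inverse p + bab.  Moreover, if q = qbq with
   qb = bq and q is in QN(I), then the idempotent qb is quasi-invertible,
   which forces qb = 0 and hence q = 0.
   (<=) If QN(I) = 0 then a quasipolar idempotent p of a satisfies ap = a;
   an element commuting with a + p commutes with its quasi-inverse q, and
   b = pq - p is then a commuting inner inverse of a. *)

Section GeneralRing.
Variable I : genRing.
Local Notation "x ** y" := (gmul x y) (at level 40, left associativity).
Implicit Types a b p q s x y : I.

Lemma gmul0r x : 0 ** x = 0.
Proof. by apply: (addrI (0 ** x)); rewrite -gmulDl !addr0. Qed.

Lemma gmulr0 x : x ** 0 = 0.
Proof. by apply: (addrI (x ** 0)); rewrite -gmulDr !addr0. Qed.

Lemma gmulNr x y : (- x) ** y = - (x ** y).
Proof. by apply: (addrI (x ** y)); rewrite -gmulDl !subrr gmul0r. Qed.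

Lemma gmulrN x y : x ** (- y) = - (x ** y).
Proof. by apply: (addrI (x ** y)); rewrite -gmulDr !subrr gmulr0. Qed.

Lemma gmulBl x y s : (x - y) ** s = x ** s - y ** s.
Proof. by rewrite gmulDl gmulNr. Qed.

Lemma gmulBr x y s : s ** (x - y) = s ** x - s ** y.
Proof. by rewrite gmulDr gmulrN. Qed.

Lemma circ_eq0 p q : circ p q = 0 <-> p + q = p ** q.
Proof. by rewrite /circ; split=> [/eqP|->]; [rewrite subr_eq0 => /eqP|rewrite subrr]. Qed.

Lemma Qset_comm x y : x ** y = y ** x -> x + y = x ** y -> Qset y.
Proof.
move=> xy sum_xy; exists x; split; apply/circ_eq0 => //.
by rewrite addrC sum_xy xy.
Qed.

Lemma QNset0 : QNset (0 : I).
Proof. by move=> x _; rewrite gmul0r; apply: (@Qset_comm 0); rewrite ?gmul0r ?addr0. Qed.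

(* An element commuting with s commutes with any quasi-inverse q of s:
   u = xq - qx satisfies us = u, hence u = u(s + q - sq) = 0. *)
Lemma comm_qinv {s q} x :
  circ q s = 0 -> circ s q = 0 -> x ** s = s ** x -> x ** q = q ** x.
Proof.
move=> /circ_eq0 qs sq xs; set u := x ** q - q ** x.
have us : u ** s = u.
  rewrite /u gmulBl -!gmulA -qs xs gmulA -qs !(gmulDl, gmulDr) xs.
  by rewrite opprD addrACA subrr addr0.
have : u ** circ s q = u by rewrite /circ gmulBr gmulDr gmulA us addrK.
by rewrite sq gmulr0 => /esym/eqP; rewrite subr_eq0 => /eqP.
Qed.

(* In a reduced ring (no nonzero square-zero elements) every idempotent is
   central: ex - exe and xe - exe are square-zero. *)
Lemma reduced_idempotent_central e x :
  (forall a, a ** a = 0 -> a = 0) -> e ** e = e -> e ** x = x ** e.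
Proof.
move=> reduced ee.
set u := e ** x - e ** x ** e; set v := x ** e - e ** x ** e.
have eu : e ** u = u by rewrite /u gmulBr !gmulA ee.
have ue : u ** e = 0 by rewrite /u gmulBl -[X in _ - X]gmulA ee subrr.
have ve : v ** e = v by rewrite /v gmulBl -[X in _ - X]gmulA -gmulA ee.
have ev : e ** v = 0 by rewrite /v gmulBr !gmulA ee subrr.
have /subr0_eq -> : u = 0 by apply: reduced; rewrite -{2}eu gmulA ue gmul0r.
have /subr0_eq -> : v = 0 by apply: reduced; rewrite -{1}ve -gmulA ev gmulr0.
by [].
Qed.

(* A strongly regular element of QN(I) is zero: its idempotent qb lies in
   Q(I), and an idempotent e with r + e = re must vanish (multiply by e). *)
Lemma strongly_regular_QN q : strongly_regular_elt q -> QNset q -> q = 0.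
Proof.
move=> [b [qbq qb_bq]] qQN; have [r [/circ_eq0 rqb _]] := qQN b (esym qb_bq).
have ee : q ** b ** (q ** b) = q ** b by rewrite gmulA -qbq.
move/(congr1 (fun t => t ** (q ** b))): rqb.
rewrite gmulDl ee -gmulA ee => /(canRL (addKr _)); rewrite addNr => qb0.
by rewrite qbq qb0 gmul0r.
Qed.

Lemma idempotent_qinv_strongly_regular a p :
  p ** p = p -> p ** a = a ** p -> a ** p = a -> Qset (a + p) ->
  strongly_regular_elt a.
Proof.
move=> pp pa ap [q [qs sq]].
have qa : a ** q = q ** a.
  by apply: (comm_qinv a qs sq); rewrite gmulDl gmulDr pa.
have qp : p ** q = q ** p.
  by apply: (comm_qinv p qs sq); rewrite gmulDl gmulDr pp pa.
have aqa : a ** q ** a = a ** a + a.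
  have : q ** a + q ** p = q + a + p by move/circ_eq0: qs; rewrite -gmulDr addrA.
  move/(congr1 (gmul a)); rewrite !gmulDr !gmulA -(gmulA a q p) -qp gmulA ap.
  by rewrite -addrA [X in _ = X]addrC => /addIr.
exists (p ** q - p); split.
- by rewrite gmulBr gmulBl gmulA ap aqa addrC addKr.
- by rewrite gmulBr gmulBl gmulA ap -gmulA -qa gmulA pa ap.
Qed.

Section StronglyRegularRing.
Hypothesis SR : strongly_regular I.

(* Strong regularity forbids nonzero square-zero elements: a = (ab)a = b(aa). *)
Lemma strongly_regular_reduced a : a ** a = 0 -> a = 0.
Proof. by move=> aa; have [b [aba ab]] := SR a; rewrite aba ab -gmulA aa gmulr0. Qed.

Lemma strongly_regular_quasipolar a : quasipolar_elt a.
Proof.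
have [b [aba ab]] := SR a; set p := a ** b; set c := b ** a ** b.
have pp : p ** p = p by rewrite /p gmulA -aba.
have p_central y : p ** y = y ** p.
  exact: reduced_idempotent_central strongly_regular_reduced pp.
have pa : p ** a = a by rewrite /p -aba.
have ca : c ** a = p by rewrite /c -gmulA -ab -/p pp.
have ac : a ** c = p by rewrite /c gmulA (gmulA a b a) -aba.
have cp : c ** p = c by rewrite /c -ab /p -p_central gmulA pp.
exists p; split.
- exact: pp.
- by move=> y _; apply: p_central.
- apply: (@Qset_comm (p + c)).
    by rewrite !(gmulDl, gmulDr) pa pp ca cp -(p_central a) pa ac (p_central c) cp.
  by rewrite !(gmulDl, gmulDr) pa pp ca cp addrC.
- by rewrite -p_central pa subrr; apply: QNset0.
Qed.

End StronglyRegularRing.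
End GeneralRing.

Theorem proposition2p18 (I : genRing) :
  strongly_regular I <->
  (quasipolar I /\ (forall q : I, QNset q <-> q = 0)).
Proof.
split.
- move=> SR; split; first exact: strongly_regular_quasipolar.
  by move=> q; split=> [|->]; [exact: strongly_regular_QN | exact: QNset0].
- move=> [QP QN_trivial] a; have [p [pp p_comm2 apQ aQN]] := QP a.
  have pa : gmul p a = gmul a p by apply: p_comm2.
  have ap : gmul a p = a by apply/esym/eqP; rewrite -subr_eq0; apply/eqP/QN_trivial.
  exact: idempotent_qinv_strongly_regular pp pa ap apQ.
Qed.
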